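(* Let $L=3$. Consider the five peak patterns (a) one peak, (b) two peaks at Hamming distance $2$, (c) two peaks at Hamming distance $3$, (d) three peaks, (e) four peaks, and the six symmetry types of regular triangulations of $[0,1]^3$ (Types 1–6, described in the context). Call a peak pattern $P$ and a type $T$ compatible if there exists a generic fitness landscape $w:\{0,1\}^3\to\mathbb{R}_{\ge 0}$ whose fitness graph has peak pattern $P$ and whose induced triangulation is of type $T$. Then: (1) the pattern with four peaks is compatible with Types 1 and 2 and with no other type; (2) the pattern with three peaks is compatible with Types 1–5 but not with Type 6; (3) each of the remaining three peak patterns (one peak; two peaks at distance 2; two peaks at distance 3) is compatible with all six types. In particular exactly $25$ of the $30$ combinations of peak pattern and triangulation type are compatible.
   Context: A fitness landscape is a map $w:\{0,1\}^L\to\mathbb{R}_{\ge 0}$, $g\mapsto w_g$; genotypes $g\in\{0,1\}^L$ are identified with the vertices of $[0,1]^L$. The triangulation (shape) induced by $w$ is the regular subdivision of $[0,1]^L$ obtained by projecting onto $[0,1]^L$ the upper faces of the polytope $\mathrm{conv}\{(g,w_g): g\in\{0,1\}^L\}\subset\mathbb{R}^{L+1}$. The landscape $w$ is generic if all values $w_g$ are distinct and this subdivision is a triangulation. The fitness graph of $w$ is the $L$-cube graph in which each edge between genotypes at Hamming distance $1$ is directed toward the genotype of higher fitness. A peak is a genotype all of whose Hamming neighbours have strictly lower fitness. The peak pattern of a fitness graph is the orbit of its set of peaks under the symmetry group of the cube (coordinate permutations and bit flips); for $L=3$ the possible patterns are exactly the five listed. The $74$ regular triangulations of $[0,1]^3$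 fall into six classes under cube symmetries. For a genotype $v$, its corner tetrahedron is $\{v\}$ together with its three Hamming neighbours. Type 1 (corner-cut): the five tetrahedra consisting of the corner tetrahedra of $100,010,001,111$ and the central tetrahedron $\{000,110,101,011\}$ (and images under symmetry). The other five types each consist of six tetrahedra and contain a main diagonal, say $\{000,111\}$ up to symmetry: the remaining six vertices form the cyclic sequence $100,110,010,011,001,101$ (consecutive ones adjacent in the cube); for a set $K$ of pairwise non-consecutive vertices of this cycle, the triangulation consists of the tetrahedra $\{000,111,a,b\}$ for $a,b$ consecutive in the cycle obtained by deleting the vertices of $K$, together with the corner tetrahedra of the vertices in $K$. Type 6 (staircase) is $K=\emptyset$; Type 2 is $|K|=3$; Types 3, 4, 5 are the remaining three classes, namely $|K|=1$, $|K|=2$ with the two vertices at cycle distance $2$, and $|K|=2$ with the two vertices opposite on the cycle. *)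

From HB Require Import structures.
From mathcomp Require Import all_boot all_order fingroup perm all_algebra.
From mathcomp Require Import reals.
Set Implicit Arguments.
Unset Strict Implicit.
Unset Printing Implicit Defensive.
Import Order.TTheory GRing.Theory Num.Theory.
Local Open Scope ring_scope.

(** Genotypes: {0,1}^3, coordinate i is the i-th bit (so "100" has bit 0 set). *)
Definition genotype := {ffun 'I_3 -> bool}.

Definition mkg (b0 b1 b2 : bool) : genotype :=
  [ffun i : 'I_3 => nth false [:: b0; b1; b2] i].

Definition g000 := mkg false false false.
Definition g100 := mkg true  false false.
Definition g010 := mkg false true  false.
Definition g001 := mkg false false true.
Definition g110 := mkg true  true  false.
Definition g101 := mkg true  false true.
Definition g011 := mkg false true  true.
Definition g111 := mkg true  true  true.

Definition hamming (g h : genotype) : nat := #|[set i | g i != h i]|.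
Definition neighbour (g h : genotype) : bool := hamming g h == 1%N.

Definition coord (R : realType) (g : genotype) (i : 'I_3) : R := (g i : nat)%:R.
Definition aff (R : realType) (a : 'I_3 -> R) (b : R) (g : genotype) : R :=
  \sum_(i < 3) a i * coord R g i + b.

(** S is (the vertex set of) an upper face of conv{(g, w g)}: there is a
    supporting affine function h >= w whose contact set is exactly S. *)
Definition upper_cell (R : realType) (w : genotype -> R) (S : {set genotype}) : Prop :=
  exists (a : 'I_3 -> R) (b : R),
    (forall g, w g <= aff a b g) /\ (forall g, aff a b g = w g <-> g \in S).

Definition full_dim (R : realType) (S : {set genotype}) : Prop :=
  forall (a : 'I_3 -> R) (b : R),
    (forall g, g \in S -> aff a b g = 0) -> forall i, a i = 0.

Definition max_cell (R : realType) (w : genotype -> R) (S : {set genotype}) : Prop :=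
  upper_cell w S /\ full_dim R S.

Definition is_triangulation (R : realType) (w : genotype -> R) : Prop :=
  forall S, max_cell w S -> #|S| = 4%N.

Definition generic (R : realType) (w : genotype -> R) : Prop :=
  injective w /\ is_triangulation w.

Definition is_peak (R : realType) (w : genotype -> R) (g : genotype) : Prop :=
  forall h, neighbour g h -> w h < w g.

Inductive peak_pattern :=
  OnePeak | TwoPeaksDist2 | TwoPeaksDist3 | ThreePeaks | FourPeaks.

Definition pattern_cond (P : peak_pattern) (S : {set genotype}) : bool :=
  match P with
  | OnePeak => #|S| == 1%N
  | TwoPeaksDist2 => (#|S| == 2%N) && [exists p in S, exists q in S, hamming p q == 2%N]
  | TwoPeaksDist3 => (#|S| == 2%N) && [exists p in S, exists q in S, hamming p q == 3%N]
  | ThreePeaks => #|S| == 3%N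
  | FourPeaks => #|S| == 4%N
  end.

Definition has_pattern (R : realType) (w : genotype -> R) (P : peak_pattern) : Prop :=
  exists S : {set genotype}, (forall g, is_peak w g <-> g \in S) /\ pattern_cond P S.

Definition sym (p : {perm 'I_3}) (f : genotype) (g : genotype) : genotype :=
  [ffun i => addb (g (p i)) (f i)].

Definition corner (v : genotype) : {set genotype} := v |: [set u | neighbour v u].

(** The cycle 100,110,010,011,001,101 around the main diagonal {000,111}. *)
Definition cyc : seq genotype := [:: g100; g110; g010; g011; g001; g101].

(** Triangulation containing the diagonal {000,111}, with corner set K. *)
Definition diag_tri (K : seq genotype) : {set {set genotype}} :=
  let c := [seq v <- cyc | v \notin K] in
  [set [set g000; g111; nth g000 c i; nth g000 c (i.+1 %% size c)]
     | i : 'I_6 & (i < size c)%N]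
  :|: [set corner v | v in K].

Inductive tri_type := Type1 | Type2 | Type3 | Type4 | Type5 | Type6.

Definition rep (T : tri_type) : {set {set genotype}} :=
  match T with
  | Type1 => [set corner g100; corner g010; corner g001; corner g111;
                  [set g000; g110; g101; g011]]
  | Type2 => diag_tri [:: g100; g010; g001]
  | Type3 => diag_tri [:: g100]
  | Type4 => diag_tri [:: g100; g010]   (* cycle distance 2 *)
  | Type5 => diag_tri [:: g100; g011]   (* opposite on the cycle *)
  | Type6 => diag_tri [::]              (* staircase *)
  end.

Definition has_type (R : realType) (w : genotype -> R) (T : tri_type) : Prop :=
  exists (p : {perm 'I_3}) (f : genotype),
    forall S, max_cell w S <-> S \in [set [set sym p f x | x in U] | U : {set genotype} in rep T].

Definition compatible (R : realType) (P : peak_pattern) (T : tri_type) : Prop :=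
  exists w : genotype -> R,
    (forall g, 0 <= w g) /\ generic w /\ has_pattern w P /\ has_type w T.

From Pilot Require Import Defs.
From mathcomp Require Import all_boot all_order fingroup perm all_algebra.
From mathcomp Require Import reals.
From mathcomp Require Import ring.
Set Implicit Arguments.
Unset Strict Implicit.
Unset Printing Implicit Defensive.
Import Order.TTheory GRing.Theory Num.Theory.

(* The maximal cells of the subdivision induced by w can be read off from the affinely
   independent 4-subsets t of the cube: a full-dimensional upper cell contains such a t,
   its supporting affine function is then the affine interpolant of w on t, and the cell
   is the set where that interpolant touches w.  So the triangulation induced by a given
   landscape is computable, and each of the 25 compatible combinations is witnessed by an
   explicit integral landscape.

   Conversely, peaks are pairwise non-adjacent.  If two vertices x, y lie in a common cell
   and z ~ x, t ~ y are peaks with x + y = z + t, the supporting affine function h of that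
   cell gives w z + w t <= h z + h t = w x + w y < w z + w t.  Pulling the peaks back along
   the cube symmetry that puts the triangulation in standard position, it suffices that
   every independent set of 4 vertices meets such a configuration in the representatives
   of Types 3-6, and every independent set of 3 vertices in the staircase. *)

(** * Genotypes as 3-bit codes *)

Notation i0 := (@Ordinal 3 0 isT).
Notation i1 := (@Ordinal 3 1 isT).
Notation i2 := (@Ordinal 3 2 isT).

Lemma ord3P (i : 'I_3) : [\/ i = i0, i = i1 | i = i2].
Proof.
by case: i => [[|[|[|//]]] hi]; [constructor 1|constructor 2|constructor 3]; apply: val_inj.
Qed.

Lemma big_ord3 (R : Type) (idx : R) (op : Monoid.com_law idx) (F : 'I_3 -> R) :
  \big[op/idx]_(i < 3) F i = op (op (F i0) (F i1)) (F i2).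
Proof.
rewrite !big_ord_recl big_ord0 Monoid.mulm1 Monoid.mulmA.
by congr (op (op (F _) (F _)) (F _)); apply: val_inj.
Qed.

Definition bit (i c : nat) : bool := odd (c %/ 2 ^ i).
Definition decode (c : nat) : genotype := [ffun i : 'I_3 => bit i c].
Definition code (g : genotype) : nat := g i0 + 2 * g i1 + 4 * g i2.
Definition codes : seq nat := iota 0 8.

Lemma decodeE c i : decode c i = bit i c.
Proof. by rewrite ffunE. Qed.

Lemma mem_codes c : (c \in codes) = (c < 8).
Proof. by rewrite mem_iota. Qed.

Lemma code_in_codes g : code g \in codes.
Proof. by rewrite mem_codes /code; case: (g i0); case: (g i1); case: (g i2). Qed.

Lemma decodeK : cancel code decode.
Proof.
move=> g; apply/ffunP => i; rewrite decodeE /code.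
by case: (ord3P i) => ->; case: (g i0); case: (g i1); case: (g i2).
Qed.

Lemma codeK c : c \in codes -> code (decode c) = c.
Proof. by rewrite mem_codes /code !decodeE; do 8?[case: c => [|c] //]. Qed.

Lemma decode_inj : {in codes &, injective decode}.
Proof. by move=> c d cc dc cd; rewrite -(codeK cc) -(codeK dc) cd. Qed.

Definition setc (l : seq nat) : {set genotype} := [set g | code g \in l].
Definition codes_of (S : {set genotype}) : seq nat := [seq c <- codes | decode c \in S].

Lemma setc_decode l c : c \in codes -> (decode c \in setc l) = (c \in l).
Proof. by move=> cc; rewrite inE codeK. Qed.

Lemma codes_ofK S : setc (codes_of S) = S.
Proof. by apply/setP => g; rewrite inE mem_filter decodeK code_in_codes andbT. Qed.

Lemma card_setc l : uniq l -> {subset l <= codes} -> #|setc l| = size l.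
Proof.
move=> ul lc; have uml : uniq (map decode l).
  by rewrite map_inj_in_uniq // => c d /lc/codeK {2}<- /lc/codeK {2}<- ->.
rewrite -(size_map decode) -(card_uniqP uml).
apply: eq_card => g; rewrite inE; apply/idP/mapP => [gl | [c cl ->]].
  by exists (code g); rewrite ?decodeK.
by rewrite codeK ?lc.
Qed.

Lemma size_codes_of S : size (codes_of S) = #|S|.
Proof.
rewrite -{2}(codes_ofK S) card_setc ?filter_uniq ?iota_uniq //.
by move=> c; rewrite mem_filter => /andP[].
Qed.

Fixpoint subseqs (s : seq nat) : seq (seq nat) :=
  if s is x :: s' then [seq x :: l | l <- subseqs s'] ++ subseqs s' else [:: [::]].

Lemma filter_in_subseqs (p : pred nat) s : filter p s \in subseqs s.
Proof.
elim: s => [|x s IH] //=; rewrite mem_cat.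
by case: (p x); rewrite ?(map_f (cons x)) ?IH ?orbT.
Qed.

Lemma mem_subseqs l s : l \in subseqs s -> {subset l <= s}.
Proof.
elim: s l => [|x s IH] l /=; first by rewrite inE => /eqP ->.
rewrite mem_cat => /orP[/mapP[l' /IH l's ->] | /IH l's] c.
  by rewrite !inE => /orP[-> // | /l's ->]; rewrite orbT.
by move/l's; rewrite inE orbC => ->.
Qed.

Definition hammingc (c d : nat) : nat :=
  (bit 0 c != bit 0 d) + (bit 1 c != bit 1 d) + (bit 2 c != bit 2 d).

Lemma hamming_decode c d : hamming (decode c) (decode d) = hammingc c d.
Proof. by rewrite /hamming -sum1_card big_mkcond big_ord3 /= !inE !decodeE. Qed.

Lemma hammingcC c d : hammingc c d = hammingc d c.
Proof. by rewrite /hammingc ![bit _ c == _]eq_sym. Qed.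

Lemma named_genotypes : [:: g000; g100; g010; g110; g001; g101; g011; g111] = map decode codes.
Proof.
by congr [:: _; _; _; _; _; _; _; _]; apply/ffunP => i; rewrite !ffunE; case: (ord3P i) => ->.
Qed.

Lemma set4_decode (a b c d : nat) : all (fun x => x \in codes) [:: a; b; c; d] ->
  [set decode a; decode b; decode c; decode d] = setc [:: a; b; c; d].
Proof.
move=> /and4P[ac bc cc /andP[dc _]]; apply/setP => g; rewrite -[g]decodeK.
move: (code g) (code_in_codes g) => x xc.
by rewrite setc_decode // !inE !(inj_in_eq decode_inj) // !orbA.
Qed.

Definition corner_codes (v : nat) : seq nat := v :: [seq c <- codes | hammingc v c == 1].

Lemma corner_decode v : v \in codes -> corner (decode v) = setc (corner_codes v).
Proof.
move=> vc; apply/setP => g; rewrite -[g]decodeK; move: (code g) (code_in_codes g) => x xc.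
rewrite setc_decode // !inE mem_filter xc (inj_in_eq decode_inj) //.
by rewrite /neighbour hamming_decode andbT.
Qed.

Definition cyc_codes : seq nat := [:: 1; 3; 2; 6; 4; 5].

Definition diag_cells (K : seq nat) : seq (seq nat) :=
  let c := [seq v <- cyc_codes | v \notin K] in
  [seq [:: 0; 7; nth 0 c i; nth 0 c (i.+1 %% size c)] | i <- iota 0 (size c)]
  ++ map corner_codes K.

Lemma diag_tri_decode K : {subset K <= codes} ->
  forall S, (S \in diag_tri (map decode K)) = (S \in [seq setc l | l <- diag_cells K]).
Proof.
move=> Kc S; have [= e000 e100 e010 e110 e001 e101 e011 e111] := named_genotypes.
set c := [seq v <- cyc_codes | v \notin K].
have cc : {subset c <= codes} by move=> v; rewrite mem_filter => /andP[_]; apply/allP.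
have cycE : [seq v <- cyc | v \notin map decode K] = map decode c.
  rewrite /cyc e100 e110 e010 e011 e001 e101 -[[:: decode 1; _; _; _; _; _]]/(map decode cyc_codes).
  rewrite filter_map; congr map; apply: eq_in_filter => v vcyc /=; congr negb.
  have vc : v \in codes by move: v vcyc; apply/allP.
  by apply/mapP/idP => [[u uK /(decode_inj vc (Kc _ uK)) ->] | vK] //; exists v.
have nth_c i : nth g000 (map decode c) i = decode (nth 0 c i).
  case: (ltnP i (size c)) => ci; first by rewrite (nth_map 0).
  by rewrite !nth_default ?size_map.
have nth_cc i : nth 0 c i \in codes.
  by case: (ltnP i (size c)) => ci; [apply/cc/mem_nth | rewrite nth_default].
have cellE i : [set g000; g111; nth g000 (map decode c) i; nth g000 (map decode c) (i.+1 %% size c)]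
             = setc [:: 0; 7; nth 0 c i; nth 0 c (i.+1 %% size c)].
  by rewrite !nth_c e000 e111 set4_decode //= !nth_cc.
have size_c : size c <= 6 by rewrite size_filter (count_size _ cyc_codes).
rewrite /diag_tri cycE size_map in_setU map_cat mem_cat -!map_comp; congr orb.
  apply/imsetP/mapP => [[i] | [i]]; rewrite ?inE ?mem_iota => ci ->.
    by exists (val i); rewrite ?mem_iota ?cellE.
  by exists (Ordinal (leq_trans ci size_c)); rewrite ?inE ?cellE.
apply/imsetP/mapP => [[_ /mapP[u uK ->] ->] | [u uK ->]].
  by exists u; rewrite //= corner_decode ?Kc.
by exists (decode u); rewrite ?map_f //= corner_decode ?Kc.
Qed.

Definition tri_cells (T : tri_type) : seq (seq nat) :=
  match T with
  | Type1 => [:: corner_codes 1; corner_codes 2; corner_codes 4; corner_codes 7; [:: 0; 3; 5; 6]]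
  | Type2 => diag_cells [:: 1; 2; 4]
  | Type3 => diag_cells [:: 1]
  | Type4 => diag_cells [:: 1; 2]
  | Type5 => diag_cells [:: 1; 6]
  | Type6 => diag_cells [::]
  end.

Lemma rep_cells T S : (S \in rep T) = (S \in [seq setc l | l <- tri_cells T]).
Proof.
have [= e000 e100 e010 e110 e001 e101 e011 e111] := named_genotypes.
case: T; rewrite /rep ?e100 ?e010 ?e001 ?e110 ?e101 ?e011 ?e111.
- by rewrite e000 !corner_decode // set4_decode // !inE !orbA.
- by apply: (@diag_tri_decode [:: 1; 2; 4]); apply/allP.
- by apply: (@diag_tri_decode [:: 1]); apply/allP.
- by apply: (@diag_tri_decode [:: 1; 2]); apply/allP.
- by apply: (@diag_tri_decode [:: 1; 6]); apply/allP.
- by apply: (@diag_tri_decode [::]); apply/allP.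
Qed.

Definition pattern_codes (P : peak_pattern) (l : seq nat) : bool :=
  let at_dist k := has (fun c => has (fun d => hammingc c d == k) l) l in
  match P with
  | OnePeak => size l == 1
  | TwoPeaksDist2 => (size l == 2) && at_dist 2
  | TwoPeaksDist3 => (size l == 2) && at_dist 3
  | ThreePeaks => size l == 3
  | FourPeaks => size l == 4
  end.

Lemma pattern_cond_setc P l : uniq l -> {subset l <= codes} ->
  pattern_cond P (setc l) = pattern_codes P l.
Proof.
move=> ul lc; have at_distE k : [exists p in setc l, exists q in setc l, hamming p q == k]
    = has (fun c => has (fun d => hammingc c d == k) l) l.
  apply/exists_inP/hasP => [[p pl /exists_inP[q ql pq]] | [c cl /hasP[d dl cd]]].
    exists (code p); first by rewrite inE in pl.
    apply/hasP; exists (code q); first by rewrite inE in ql.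
    by rewrite -hamming_decode !decodeK.
  exists (decode c); rewrite ?setc_decode ?lc //; apply/exists_inP.
  by exists (decode d); rewrite ?setc_decode ?lc ?hamming_decode.
by case: P; rewrite /= card_setc ?at_distE.
Qed.

Definition peak_count (P : peak_pattern) : nat :=
  match P with
  | OnePeak => 1 | TwoPeaksDist2 | TwoPeaksDist3 => 2 | ThreePeaks => 3 | FourPeaks => 4
  end.

Lemma pattern_cond_card P S : pattern_cond P S -> #|S| = peak_count P.
Proof. by case: P => /= [/eqP|/andP[/eqP]|/andP[/eqP]|/eqP|/eqP]. Qed.

Definition independent (l : seq nat) : bool :=
  all (fun c => all (fun d => hammingc c d != 1) l) l.

Definition midpoint_eq (x y z t : nat) : bool :=
  all (fun i => bit i x + bit i y == bit i z + bit i t) (iota 0 3).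

Lemma midpoint_decode x y z t : midpoint_eq x y z t ->
  forall i, (decode x i : nat) + decode y i = (decode z i : nat) + decode t i.
Proof. by move=> /allP mid i; rewrite !decodeE; apply/eqP/mid; rewrite mem_iota ltn_ord. Qed.

Definition obstructs (cells : seq (seq nat)) (pk : seq nat) : bool :=
  has (fun l => let pts := [seq x <- codes | x \in l] in
    has (fun x => has (fun y => has (fun z => has (fun t =>
      [&& hammingc z x == 1, hammingc t y == 1 & midpoint_eq x y z t]) pk) pk) pts) pts) cells.

Definition obstructed (k : nat) (T : tri_type) : bool :=
  all (obstructs (tri_cells T)) [seq l <- subseqs codes | (size l == k) && independent l].

Local Open Scope ring_scope.

(** * Cramer's rule in dimension 3 *)

Definition vec3 (T : Type) (x y z : T) (i : 'I_3) : T :=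
  match nat_of_ord i with 0 => x | 1 => y | _ => z end.

Section Cramer.
Variable R : comPzRingType.
Implicit Types (a u v w : 'I_3 -> R) (x y z : R).

Definition dot u v := u i0 * v i0 + u i1 * v i1 + u i2 * v i2.

Definition det3 u v w :=
  u i0 * (v i1 * w i2 - v i2 * w i1) - u i1 * (v i0 * w i2 - v i2 * w i0)
  + u i2 * (v i0 * w i1 - v i1 * w i0).

(* [cramer u v w x y z] is [det3 u v w] times the solution a of
   [dot a u = x], [dot a v = y], [dot a w = z]. *)
Definition cramer u v w x y z : 'I_3 -> R :=
  vec3 (det3 (vec3 x (u i1) (u i2)) (vec3 y (v i1) (v i2)) (vec3 z (w i1) (w i2)))
       (det3 (vec3 (u i0) x (u i2)) (vec3 (v i0) y (v i2)) (vec3 (w i0) z (w i2)))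
       (det3 (vec3 (u i0) (u i1) x) (vec3 (v i0) (v i1) y) (vec3 (w i0) (w i1) z)).

Lemma dot_cramer u v w x y z :
  [/\ dot (cramer u v w x y z) u = det3 u v w * x,
      dot (cramer u v w x y z) v = det3 u v w * y
    & dot (cramer u v w x y z) w = det3 u v w * z].
Proof. by split; rewrite /dot /cramer /det3 /vec3 /=; ring. Qed.

Lemma cramer_dot u v w a j :
  cramer u v w (dot a u) (dot a v) (dot a w) j = det3 u v w * a j.
Proof. by case: (ord3P j) => ->; rewrite /dot /cramer /det3 /vec3 /=; ring. Qed.

Lemma cramer0 u v w j : cramer u v w 0 0 0 j = 0.
Proof. by case: (ord3P j) => ->; rewrite /cramer /det3 /vec3 /=; ring. Qed.

End Cramer.

(** * Maximal cells of a regular subdivision of the cube *)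

(* A 4-subset of the cube is represented by the list of its four codes. *)
Definition vertex (t : seq nat) (k : nat) : nat := nth 0%N t k.

Definition point (R : pzSemiRingType) (c : nat) (i : 'I_3) : R := (bit i c)%:R.

Definition point_sub (R : pzRingType) (c d : nat) (i : 'I_3) : R := point R c i - point R d i.

Lemma aff_decode (R : realType) (a : 'I_3 -> R) b c : aff a b (decode c) = dot a (point R c) + b.
Proof. by rewrite /aff big_ord3 /Defs.coord !decodeE. Qed.

Definition edge (R : pzRingType) (t : seq nat) (k : nat) : 'I_3 -> R :=
  point_sub R (vertex t k) (vertex t 0).

Definition tet_det (R : comPzRingType) (t : seq nat) : R :=
  det3 (edge R t 1) (edge R t 2) (edge R t 3).

Definition interp_num (R : comPzRingType) (wc : nat -> R) (t : seq nat) : 'I_3 -> R :=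
  let dw k := wc (vertex t k) - wc (vertex t 0) in
  cramer (edge R t 1) (edge R t 2) (edge R t 3) (dw 1%N) (dw 2%N) (dw 3%N).

Definition interp_lin (R : fieldType) (wc : nat -> R) t (j : 'I_3) : R :=
  interp_num wc t j / tet_det R t.

Definition interp_off (R : fieldType) (wc : nat -> R) t : R :=
  wc (vertex t 0) - dot (interp_lin wc t) (point R (vertex t 0)).

(* [gap wc t c] is [tet_det t ^+ 2] times the excess of the interpolant of [wc] on [t]
   over [wc] at [c] (see [gapE]); being division-free, it can be computed in [int]. *)
Definition gap (R : comPzRingType) (wc : nat -> R) (t : seq nat) (c : nat) : R :=
  let D := tet_det R t in
  D * (dot (interp_num wc t) (point_sub R c (vertex t 0)) + D * (wc (vertex t 0) - wc c)).

Lemma tet_det_rmorph (R S : comPzRingType) (f : {rmorphism R -> S}) t :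
  f (tet_det R t) = tet_det S t.
Proof.
rewrite /tet_det /det3 /edge /point_sub /point /=.
by rewrite !(rmorphD, rmorphN, rmorphM, rmorph_nat).
Qed.

Lemma gap_rmorph (R S : comPzRingType) (f : {rmorphism R -> S}) wc t c :
  f (gap wc t c) = gap (f \o wc) t c.
Proof.
rewrite /gap /tet_det /interp_num /cramer /det3 /dot /edge /point_sub /point /vec3 /=.
by rewrite !(rmorphD, rmorphN, rmorphM, rmorph_nat).
Qed.

Lemma dot_edge (R : realType) (a : 'I_3 -> R) b t k :
  dot a (edge R t k) = aff a b (decode (vertex t k)) - aff a b (decode (vertex t 0)).
Proof. by rewrite !aff_decode /dot /edge /point_sub; ring. Qed.

Section Tetrahedron.
Variables (R : realType) (t : seq nat).
Hypothesis det_neq0 : tet_det R t != 0.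

Lemma aff_vanish_tet (a : 'I_3 -> R) (b : R) :
  (forall k, (k < 4)%N -> aff a b (decode (vertex t k)) = 0) -> forall i, a i = 0.
Proof.
move=> a_t i; have /eqP := cramer_dot (edge R t 1) (edge R t 2) (edge R t 3) a i.
rewrite !(dot_edge _ b) !a_t // subrr cramer0 eq_sym mulf_eq0.
by rewrite (negbTE det_neq0) => /eqP.
Qed.

Lemma full_dim_tet (S : {set genotype}) :
  (forall k, (k < 4)%N -> decode (vertex t k) \in S) -> full_dim R S.
Proof. by move=> tS a b aS; apply: (aff_vanish_tet (b := b)) => k /tS /aS. Qed.

Lemma aff_eq_tet (a a' : 'I_3 -> R) (b b' : R) :
  (forall k, (k < 4)%N -> aff a b (decode (vertex t k)) = aff a' b' (decode (vertex t k))) ->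
  forall c, aff a b (decode c) = aff a' b' (decode c).
Proof.
move=> eq_t; pose d i := a i - a' i.
have aff_d c : aff d (b - b') (decode c) = aff a b (decode c) - aff a' b' (decode c).
  by rewrite !aff_decode /dot /d; ring.
have d0 : forall i, d i = 0.
  by apply: (aff_vanish_tet (b := b - b')) => k kt; rewrite aff_d eq_t ?subrr.
have aff_d_const c : aff d (b - b') (decode c) = b - b'.
  by rewrite aff_decode /dot !d0 !mul0r !add0r.
move=> c; apply/eqP; rewrite -subr_eq0 -aff_d aff_d_const.
by rewrite -(aff_d_const (vertex t 0)) aff_d eq_t // subrr.
Qed.

Variable wc : nat -> R.
Notation interp := (aff (interp_lin wc t) (interp_off wc t)).

Lemma dot_interp_num k : (0 < k < 4)%N ->
  dot (interp_num wc t) (edge R t k) = tet_det R t * (wc (vertex t k) - wc (vertex t 0)).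
Proof.
case: k => [|[|[|[|//]]]] // _; rewrite /interp_num.
all: by have [] := dot_cramer (edge R t 1) (edge R t 2) (edge R t 3)
  (wc (vertex t 1) - wc (vertex t 0)) (wc (vertex t 2) - wc (vertex t 0))
  (wc (vertex t 3) - wc (vertex t 0)).
Qed.

Lemma interp_tet k : (k < 4)%N -> interp (decode (vertex t k)) = wc (vertex t k).
Proof.
move=> k4; rewrite aff_decode /interp_off.
case: (posnP k) => [->|k_gt0]; first by rewrite addrC subrK.
have -> : dot (interp_lin wc t) (point R (vertex t k)) =
          dot (interp_num wc t) (edge R t k) / tet_det R t
          + dot (interp_lin wc t) (point R (vertex t 0)).
  by rewrite /dot /edge /point_sub /interp_lin; ring.
rewrite dot_interp_num ?k_gt0 // mulrC mulKf //; ring.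
Qed.

Lemma gapE c : gap wc t c = tet_det R t ^+ 2 * (interp (decode c) - wc c).
Proof. by rewrite aff_decode /interp_off /gap /interp_lin /dot /point_sub; field. Qed.

Lemma gap_ge0 c : (0 <= gap wc t c) = (wc c <= interp (decode c)).
Proof. by rewrite gapE pmulr_rge0 ?subr_ge0 // exprn_even_gt0 ?det_neq0 ?orbT. Qed.

Lemma gap_eq0 c : (gap wc t c == 0) = (interp (decode c) == wc c).
Proof. by rewrite gapE mulf_eq0 expf_eq0 (negbTE det_neq0) andbF subr_eq0. Qed.

End Tetrahedron.

Definition indep_tets : seq (seq nat) :=
  [seq t <- subseqs codes | (size t == 4%N) && (tet_det int t != 0)].

(* The differences of two vertices are exactly the nonzero vectors of {-1,0,1}^3,
   which contain a normal vector of every plane spanned by vertices of the cube. *)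
Definition coplanar (l : seq nat) : bool :=
  has (fun p => (p.1 != p.2) &&
         all (fun x => dot (point_sub int p.1 p.2) (point int x)
                       == dot (point_sub int p.1 p.2) (point int (head 0%N l))) l)
      [seq (c, d) | c <- codes, d <- codes].

Lemma spanning_or_coplanar :
  all (fun l => has (fun t => all (fun c => c \in l) t) indep_tets || coplanar l) (subseqs codes).
Proof. by vm_compute. Qed.

Lemma mem_indep_tets (R : realType) t : t \in indep_tets ->
  [/\ tet_det R t != 0, forall k, (k < 4)%N -> vertex t k \in t & {subset t <= codes}].
Proof.
rewrite mem_filter => /andP[/andP[/eqP t4 det_neq0] /mem_subseqs tc]; split => //.
  by rewrite -(tet_det_rmorph (intmul (1 : R))) intr_eq0.
by move=> k k4; rewrite /vertex mem_nth ?t4.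
Qed.

Lemma full_dim_not_coplanar (R : realType) S : full_dim R S -> ~~ coplanar (codes_of S).
Proof.
move=> fdS; apply/hasP => -[[c d] /allpairsP[[c' d'] [cc dd [-> ->]]]].
move: cc dd => /= cc dd /andP[/negP cd /allP on_plane]; apply: cd; apply/eqP.
pose e := dot (point_sub R c' d') (point R (head 0%N (codes_of S))).
have intr_dot x :
    dot (point_sub R c' d') (point R x) = (dot (point_sub int c' d') (point int x))%:~R.
  by rewrite /dot /point_sub /point !(rmorphD, rmorphN, rmorphM, rmorph_nat).
have sub0 : forall i, point_sub R c' d' i = 0.
  apply: (fdS _ (- e)) => g gS; rewrite -[g]decodeK aff_decode /e !intr_dot.
  by rewrite (eqP (on_plane _ _)) ?subrr // mem_filter decodeK gS code_in_codes.
have bits (i : 'I_3) : bit i c' = bit i d'.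
  by apply/eqP; move/eqP: (sub0 i); rewrite subr_eq0 eqr_nat; case: (bit i c'); case: (bit i d').
by rewrite -(codeK cc) -(codeK dd); congr code; apply/ffunP => i; rewrite !decodeE bits.
Qed.

Lemma full_dim_indep_tet (R : realType) S : full_dim R S ->
  exists2 t, t \in indep_tets & {subset t <= codes_of S}.
Proof.
move=> /full_dim_not_coplanar not_coplanar.
have := allP spanning_or_coplanar _ (filter_in_subseqs (fun c => decode c \in S) codes).
by rewrite -/(codes_of S) (negbTE not_coplanar) orbF => /hasP[t ? /allP]; exists t.
Qed.

Definition dominates (R : numDomainType) (wc : nat -> R) t : bool :=
  all (fun c => 0 <= gap wc t c) codes.

Definition contact (R : numDomainType) (wc : nat -> R) t : seq nat :=
  [seq c <- codes | gap wc t c == 0].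

Definition cells (R : numDomainType) (wc : nat -> R) : seq (seq nat) :=
  [seq contact wc t | t <- indep_tets & dominates wc t].

Lemma max_cellP (R : realType) (wc : nat -> R) S :
  max_cell (wc \o code) S <-> S \in [seq setc l | l <- cells wc].
Proof.
split.
- move=> [[a [b [w_le w_eq]]] /full_dim_indep_tet[t t_indep tS]].
  have [det_neq0 t_vert t_codes] := mem_indep_tets R t_indep.
  have interp_aff c :
      aff (interp_lin wc t) (interp_off wc t) (decode c) = aff a b (decode c).
    apply: (aff_eq_tet det_neq0) => k k4; rewrite interp_tet //.
    have /tS := t_vert k k4; rewrite mem_filter => /andP[/w_eq -> _] /=.
    by rewrite codeK ?t_codes ?t_vert.
  apply/mapP; exists (contact wc t).
    apply/mapP; exists t => //; rewrite mem_filter t_indep andbT.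
    by apply/allP => c cc; rewrite gap_ge0 // interp_aff; have := w_le (decode c); rewrite /= codeK.
  apply/setP => g; rewrite inE mem_filter code_in_codes andbT gap_eq0 // interp_aff decodeK.
  by apply/idP/eqP => /w_eq.
- case/mapP => l /mapP[t]; rewrite mem_filter => /andP[/allP dom t_indep] -> ->.
  have [det_neq0 t_vert t_codes] := mem_indep_tets R t_indep.
  split.
    exists (interp_lin wc t), (interp_off wc t); split => g.
      by have := dom _ (code_in_codes g); rewrite gap_ge0 // decodeK.
    rewrite inE mem_filter code_in_codes andbT gap_eq0 // decodeK.
    by split => /eqP.
  apply: (full_dim_tet det_neq0) => k k4.
  rewrite setc_decode ?t_codes ?t_vert // mem_filter gap_eq0 // interp_tet //.
  by rewrite eqxx t_codes ?t_vert.
Qed.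

Lemma cells_intr (R : realType) (f : nat -> int) : cells (fun c => (f c)%:~R : R) = cells f.
Proof.
have gapE t c : gap (fun c => (f c)%:~R : R) t c = (gap f t c)%:~R.
  by rewrite (gap_rmorph (intmul (1 : R))).
have dominatesE t : dominates (fun c => (f c)%:~R : R) t = dominates f t.
  by apply: eq_all => c; rewrite gapE ler0z.
have contactE t : contact (fun c => (f c)%:~R : R) t = contact f t.
  by apply: eq_filter => c; rewrite gapE intr_eq0.
by rewrite /cells (eq_filter dominatesE) (eq_map contactE).
Qed.

Lemma cell_uniq_codes (R : numDomainType) (wc : nat -> R) l :
  l \in cells wc -> uniq l /\ {subset l <= codes}.
Proof.
case/mapP => t _ ->; split; first by rewrite filter_uniq ?iota_uniq.
by move=> c; rewrite mem_filter => /andP[].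
Qed.

Definition peakc (R : numDomainType) (wc : nat -> R) (c : nat) : bool :=
  all (fun d => (hammingc c d == 1%N) ==> (wc d < wc c)) codes.

Lemma is_peakP (R : realType) (wc : nat -> R) g : is_peak (wc \o code) g <-> peakc wc (code g).
Proof.
split=> [pk | /allP pk h gh].
  apply/allP => d dc; apply/implyP => gd.
  by have := pk (decode d); rewrite /neighbour -{1}(decodeK g) hamming_decode /= codeK //; apply.
by have := pk _ (code_in_codes h); rewrite -hamming_decode !decodeK -/(neighbour g h) gh.
Qed.

Lemma peakc_intr (R : realType) (f : nat -> int) c : peakc (fun c => (f c)%:~R : R) c = peakc f c.
Proof. by apply: eq_all => d; rewrite ltr_int. Qed.

(** * Compatibility from an explicit landscape *)

Definition same_cell (l l' : seq nat) : bool := all (fun c => (c \in l) == (c \in l')) codes.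

Definition same_cells (A B : seq (seq nat)) : bool :=
  all (fun a => has (same_cell a) B) A && all (fun b => has (same_cell b) A) B.

Lemma same_cell_setc l l' : same_cell l l' -> setc l = setc l'.
Proof. by move=> /allP same; apply/setP => g; rewrite !inE (eqP (same _ (code_in_codes g))). Qed.

Lemma same_cells_setc A B : same_cells A B -> forall S, (S \in map setc A) = (S \in map setc B).
Proof.
have incl A' B' : all (fun a => has (same_cell a) B') A' ->
    forall S, S \in map setc A' -> S \in map setc B'.
  move=> /allP AB S /mapP[a /AB /hasP[b bB /same_cell_setc ab] ->].
  by rewrite ab map_f.
by case/andP=> AB BA S; apply/idP/idP; apply: incl.
Qed.

Lemma sym_id : sym 1 [ffun => false] =1 id.
Proof. by move=> g; apply/ffunP => i; rewrite !ffunE perm1 addbF. Qed.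

Lemma has_type_id (R : realType) (w : genotype -> R) T :
  (forall S, max_cell w S <-> S \in rep T) -> has_type w T.
Proof.
move=> cellsE; exists 1%g, [ffun => false] => S; rewrite cellsE.
have symE (U : {set genotype}) : [set sym 1 [ffun => false] x | x in U] = U.
  by rewrite -[RHS]imset_id; apply: eq_imset => x; rewrite sym_id.
by rewrite (eq_imset _ symE) imset_id.
Qed.

Definition weights (wn : seq nat) (c : nat) : int := (nth 0%N wn c)%:Z.

Definition witness_ok (P : peak_pattern) (T : tri_type) (wn : seq nat) : bool :=
  let wz := weights wn in
  [&& all (fun c => all (fun d => (wz c == wz d) ==> (c == d)) codes) codes,
      pattern_codes P [seq c <- codes | peakc wz c],
      all (fun l => size l == 4%N) (cells wz)
    & same_cells (cells wz) (tri_cells T)].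

Lemma compatible_of_witness (R : realType) P T wn : witness_ok P T wn -> compatible R P T.
Proof.
case/and4P => /allP wz_inj pat cells4 same.
pose wc c : R := (weights wn c)%:~R.
have cellsE S : max_cell (wc \o code) S <-> S \in [seq setc l | l <- cells (weights wn)].
  by rewrite -(cells_intr R); exact: max_cellP.
exists (wc \o code); split; [|split; [split|split]].
- by move=> g; rewrite /wc /= ler0z.
- move=> g h /eqP; rewrite /wc /= eqr_int => wgh.
  rewrite -[g]decodeK -[h]decodeK; congr decode; apply/eqP.
  exact: (implyP (allP (wz_inj _ (code_in_codes g)) _ (code_in_codes h)) wgh).
- move=> S /cellsE /mapP[l lc ->].
  by have [ul lcodes] := cell_uniq_codes lc; rewrite card_setc // (eqP (allP cells4 _ lc)).
- exists (setc [seq c <- codes | peakc (weights wn) c]); split.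
    by move=> g; rewrite is_peakP inE mem_filter code_in_codes andbT peakc_intr.
  by rewrite pattern_cond_setc ?filter_uniq ?iota_uniq // => c; rewrite mem_filter => /andP[].
- by apply: has_type_id => S; rewrite rep_cells -(same_cells_setc same); exact: cellsE.
Qed.

(** * Incompatibility from an obstruction *)

Lemma upper_cell_midpoint (R : realType) (w : genotype -> R) S (x y z t : genotype) :
  upper_cell w S -> x \in S -> y \in S ->
  (forall i, (x i : nat) + y i = (z i : nat) + t i)%N ->
  w z + w t <= w x + w y.
Proof.
move=> [a [b [w_le w_eq]]] /w_eq <- /w_eq <- mid.
suff -> : aff a b x + aff a b y = aff a b z + aff a b t by apply: lerD.
have midR i : ((x i : nat)%:R : R) = (z i : nat)%:R + (t i : nat)%:R - (y i : nat)%:R.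
  by rewrite -natrD -mid natrD addrK.
by rewrite /aff !big_ord3 /Defs.coord /= !midR; ring.
Qed.

Lemma no_upper_cell_under_peaks (R : realType) (w : genotype -> R) S (x y z t : genotype) :
  is_peak w z -> is_peak w t -> neighbour z x -> neighbour t y ->
  (forall i, (x i : nat) + y i = (z i : nat) + t i)%N ->
  upper_cell w S -> x \in S -> y \in S -> False.
Proof.
move=> zpk tpk zx ty mid cell xS yS.
have := upper_cell_midpoint cell xS yS mid.
by rewrite leNgt ltrD ?zpk ?tpk.
Qed.

Lemma sym_inj (p : {perm 'I_3}) f : injective (sym p f).
Proof.
move=> g h /ffunP gh; apply/ffunP => j; have := gh (p^-1 j)%g.
by rewrite !ffunE permKV => /addIb.
Qed.

Lemma hamming_sym (p : {perm 'I_3}) f g h : hamming (sym p f g) (sym p f h) = hamming g h.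
Proof.
rewrite /hamming -[RHS](card_preimset _ (@perm_inj _ p)).
by apply: eq_card => i; rewrite !inE !ffunE; case: (f i); case: (g (p i)); case: (h (p i)).
Qed.

Lemma sym_midpoint (p : {perm 'I_3}) f (x y z t : genotype) :
  (forall i, (x i : nat) + y i = (z i : nat) + t i)%N ->
  (forall i, (sym p f x i : nat) + sym p f y i = (sym p f z i : nat) + sym p f t i)%N.
Proof.
move=> mid i; rewrite !ffunE; move: (mid (p i)).
by case: (f i); case: (x (p i)); case: (y (p i)); case: (z (p i)); case: (t (p i)).
Qed.

Lemma incompatible_of_obstructed (R : realType) P T :
  obstructed (peak_count P) T -> ~ compatible R P T.
Proof.
move=> /allP obs [w [_ [_ [[S [peakS /pattern_cond_card cardS]] [p [f typeT]]]]]].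
pose s := sym p f; pose pk := codes_of (s @^-1: S).
have pk_peak c : c \in pk -> is_peak w (s (decode c)).
  by rewrite mem_filter inE => /andP[/peakS].
have s_adj c d : hammingc c d = 1%N -> neighbour (s (decode c)) (s (decode d)).
  by move=> cd; rewrite /neighbour hamming_sym hamming_decode cd.
have pk_indep : independent pk.
  apply/allP => c cpk; apply/allP => d dpk; apply/negP => /eqP cd.
  have := pk_peak c cpk _ (s_adj _ _ cd); have := pk_peak d dpk _ (s_adj d c _).
  by rewrite hammingcC cd => /(_ erefl) /lt_trans lt_dc /lt_dc; rewrite ltxx.
have size_pk : size pk = peak_count P.
  by rewrite size_codes_of card_preimset ?cardS //; exact: sym_inj.
have /obs : pk \in [seq l <- subseqs codes | (size l == peak_count P) && independent l].
  by rewrite mem_filter size_pk eqxx pk_indep filter_in_subseqs.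
case/hasP => l lT /hasP[x]; rewrite mem_filter => /andP[xl xc] /hasP[y].
rewrite mem_filter => /andP[yl yc] /hasP[z zpk] /hasP[t tpk] /and3P[/eqP zx /eqP ty mid].
have cell : upper_cell w (s @: setc l).
  by apply: (proj1 (proj2 (typeT _) _)); apply: imset_f; rewrite rep_cells map_f.
apply: (no_upper_cell_under_peaks (pk_peak _ zpk) (pk_peak _ tpk) (s_adj _ _ zx) (s_adj _ _ ty)
  (sym_midpoint p f (midpoint_decode mid)) cell); by rewrite imset_f // setc_decode.
Qed.

(** * The classification *)

Local Close Scope ring_scope.

Definition predicted (P : peak_pattern) (T : tri_type) : bool :=
  match P, T with
  | FourPeaks, (Type1 | Type2) => true
  | FourPeaks, _ => false
  | ThreePeaks, Type6 => false
  | _, _ => true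
  end.

(* Entry c of a witness is the fitness of the genotype [decode c]. *)
Definition witness (P : peak_pattern) (T : tri_type) : seq nat :=
  match P, T with
  | OnePeak, Type1 => [:: 50; 18; 4; 20; 56; 64; 54; 28]
  | OnePeak, Type2 => [:: 54; 4; 6; 10; 64; 60; 70; 46]
  | OnePeak, Type3 => [:: 54; 0; 78; 68; 6; 14; 48; 60]
  | OnePeak, Type4 => [:: 46; 4; 2; 40; 52; 20; 76; 54]
  | OnePeak, Type5 => [:: 66; 14; 18; 40; 72; 70; 8; 56]
  | OnePeak, Type6 => [:: 66; 56; 42; 34; 14; 22; 12; 28]
  | TwoPeaksDist2, Type1 => [:: 30; 32; 8; 56; 54; 76; 72; 58]
  | TwoPeaksDist2, Type2 => [:: 78; 22; 44; 36; 8; 20; 68; 32]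
  | TwoPeaksDist2, Type3 => [:: 68; 26; 38; 24; 30; 46; 10; 34]
  | TwoPeaksDist2, Type4 => [:: 78; 24; 20; 66; 32; 52; 36; 62]
  | TwoPeaksDist2, Type5 => [:: 34; 18; 54; 46; 44; 48; 52; 74]
  | TwoPeaksDist2, Type6 => [:: 74; 52; 20; 14; 56; 78; 30; 68]
  | TwoPeaksDist3, Type1 => [:: 72; 78; 16; 70; 18; 76; 30; 24]
  | TwoPeaksDist3, Type2 => [:: 36; 18; 0; 42; 14; 54; 48; 64]
  | TwoPeaksDist3, Type3 => [:: 74; 18; 14; 48; 56; 44; 2; 60]
  | TwoPeaksDist3, Type4 => [:: 24; 8; 20; 56; 18; 32; 58; 74]
  | TwoPeaksDist3, Type5 => [:: 34; 8; 32; 22; 12; 18; 6; 26]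
  | TwoPeaksDist3, Type6 => [:: 52; 8; 48; 18; 16; 42; 14; 74]
  | ThreePeaks, Type1 => [:: 36; 2; 52; 70; 12; 22; 78; 14]
  | ThreePeaks, Type2 => [:: 66; 0; 4; 54; 34; 52; 16; 30]
  | ThreePeaks, Type3 => [:: 66; 30; 34; 54; 22; 58; 6; 44]
  | ThreePeaks, Type4 => [:: 68; 26; 42; 62; 12; 0; 44; 34]
  | ThreePeaks, Type5 => [:: 44; 4; 62; 30; 46; 26; 14; 48]
  | FourPeaks, Type1 => [:: 48; 26; 12; 62; 2; 78; 54; 0]
  | FourPeaks, Type2 => [:: 74; 20; 48; 62; 26; 46; 50; 44]
  | _, _ => [::]
  end.

Definition peak_patterns := [:: OnePeak; TwoPeaksDist2; TwoPeaksDist3; ThreePeaks; FourPeaks].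
Definition tri_types := [:: Type1; Type2; Type3; Type4; Type5; Type6].

Lemma witnesses_ok : all (fun P =>
  all (fun T => predicted P T ==> witness_ok P T (witness P T)) tri_types) peak_patterns.
Proof. by vm_compute. Qed.

Lemma obstructions_ok : all (fun P =>
  all (fun T => ~~ predicted P T ==> obstructed (peak_count P) T) tri_types) peak_patterns.
Proof. by vm_compute. Qed.

Lemma all_In (T : Type) (a : pred T) s x : all a s -> List.In x s -> a x.
Proof. by elim: s => //= y s IH /andP[ay /IH all_s] [<- | /all_s]. Qed.

Lemma compatibleP (R : realType) P T : compatible R P T <-> predicted P T.
Proof.
have P_in : List.In P peak_patterns by case: P => /=; tauto.
have T_in : List.In T tri_types by case: T => /=; tauto.
have := all_In (all_In witnesses_ok P_in) T_in.
have := all_In (all_In obstructions_ok P_in) T_in.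
case: (predicted P T) => /= obstr witn; split=> // compat.
  exact: compatible_of_witness witn.
by case: (incompatible_of_obstructed obstr compat).
Qed.

Theorem theorem1 (R : realType) :
  (forall T, compatible R FourPeaks T <-> T = Type1 \/ T = Type2) /\
  (forall T, compatible R ThreePeaks T <-> T <> Type6) /\
  (forall T, compatible R OnePeak T /\ compatible R TwoPeaksDist2 T /\
             compatible R TwoPeaksDist3 T).
Proof.
split; [|split] => T; rewrite ?compatibleP.
- by case: T; split => //; first [by left | by right | by case].
- by case: T.
- by case: T.
Qed.
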